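(* Let $(\xi_n)_{n\ge0}$ be a real-valued process adapted to a filtration $(\mathcal F_n)_{n\ge0}$, and suppose there exist $a\in\mathbb R$ and $b>0$ such that: (1) $\mathbb E\big((\xi_{k+1}-\xi_k)1_{\{\xi_k\ge a\}}\mid\mathcal F_k\big)\le 0$ a.s. for all $k$; (2) $\limsup_{k\to\infty}1_{\{\xi_k<a<\xi_{k+1}\}}(\xi_{k+1}-a)\le b$ almost surely; (3) $\sum_k\mathbb E\big[(\xi_{k+1}-\xi_k)^2 1_{\{\xi_k\ge a\}}\big]<\infty$. Then $\limsup_{n\to\infty}\xi_n<\infty$ almost surely. *)

From HB Require Import structures.
From mathcomp Require Import all_boot all_order all_algebra.
From mathcomp Require Import all_classical all_reals all_analysis.
Set Implicit Arguments. Unset Strict Implicit. Unset Printing Implicit Defensive.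
Import Order.TTheory GRing.Theory Num.Theory.
Local Open Scope classical_set_scope.
Local Open Scope ring_scope.

(* A sub-sigma-algebra G of the ambient one, and "E(X | G) <= 0 a.s.":
   X is integrable and some (equivalently every) version Y of the conditional
   expectation of X given G (G-measurable, integrable, with the same integrals
   as X over every G-set) satisfies Y <= 0 almost surely. *)
Definition G_measurable_fun {T : Type} {R : realType} (G : set (set T)) (Y : T -> R) :=
  forall B : set R, measurable B -> G (Y @^-1` B).

Definition cond_exp_le0 {d : measure_display} {T : measurableType d} {R : realType}
  (P : probability T R) (G : set (set T)) (X : T -> R) : Prop :=
  P.-integrable setT (EFin \o X) /\
  exists Y : T -> R,
    [/\ G_measurable_fun G Y,
        P.-integrable setT (EFin \o Y),
        (forall A, G A -> (\int[P]_(w in A) (Y w)%:E = \int[P]_(w in A) (X w)%:E)%E)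
      & {ae P, forall w, Y w <= 0}].

Definition filtration {d : measure_display} {T : measurableType d} (F : nat -> set (set T)) :=
  [/\ forall n, sigma_algebra setT (F n),
      forall n, F n `<=` measurable
    & forall n, F n `<=` F n.+1].

Definition adapted {T : Type} {R : realType} (F : nat -> set (set T)) (xi : nat -> T -> R) :=
  forall n, G_measurable_fun (F n) (xi n).

From HB Require Import structures.
From mathcomp Require Import all_boot all_order all_algebra.
From mathcomp Require Import all_classical all_reals all_analysis.
From mathcomp Require Import measurable_realfun.
From mathcomp Require Import ring lra.

(* Let D_k := (xi_(k+1) - xi_k) 1{a <= xi_k}, so that E(D_k | F_k) <= 0. Started at time N,
   run the walk U with increments D_N, D_(N+1), ..., reset to 0 whenever it would become
   negative and absorbed once it reaches 1. While U stays below 1, xi cannot exceed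
   max(xi_N, a + c) + 1, where c eventually bounds the overshoots above a: above a the
   process moves exactly by D, below a it can only jump to a + c. In
   U_(i+1)^2 <= U_i^2 + 2 U_i 1{U_i < 1} D_i + D_i^2 the cross term has nonpositive mean,
   so P(U reaches 1) <= E U^2 <= sum_(k >= N) E D_k^2, a tail of a convergent series.
   Hence almost surely U stays below 1 for some N, and limsup xi_n < +oo. *)

Import Order.TTheory GRing.Theory Num.Theory.
Local Open Scope classical_set_scope.
Local Open Scope ring_scope.

Lemma le0_of_le_divn {R : archiRealFieldType} (r c : R) :
  (forall m : nat, (0 < m)%N -> r <= c / m%:R) -> r <= 0.
Proof.
move=> rc; rewrite leNgt; apply/negP => r0.
have m0 : (0 < (Num.truncn (c / r)).+1)%N by [].
have := rc _ m0; rewrite ler_pdivlMr ?ltr0n // mulrC -ler_pdivlMr //.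
by rewrite leNgt truncnS_gt.
Qed.

Lemma trunc_div_approx {R : archiRealFieldType} {m : nat} {y : R} :
  (0 < m)%N -> 0 <= y ->
  0 <= y - (Num.truncn (m%:R * y))%:R / m%:R <= m%:R^-1.
Proof.
move=> m0 y0; have m0R : 0 < (m%:R : R) by rewrite ltr0n.
have /andP[lo hi] := truncn_itv (mulr_ge0 (ler0n _ m) y0).
apply/andP; split.
  by rewrite subr_ge0 ler_pdivrMr // [_ * m%:R]mulrC.
rewrite lerBlDr.
have -> : (m%:R : R)^-1 + (Num.truncn (m%:R * y))%:R / m%:R
        = (Num.truncn (m%:R * y)).+1%:R / m%:R.
  by rewrite -natr1 mulrDl mul1r addrC.
by rewrite ler_pdivlMr // [_ * m%:R]mulrC ltW.
Qed.

Lemma trunc_div_mul_le {R : archiRealFieldType} {m : nat} {y : R} (x : R) :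
  (0 < m)%N -> 0 <= y ->
  y * x <= (Num.truncn (m%:R * y))%:R / m%:R * x + `|x| / m%:R.
Proof.
move=> m0 y0; have /andP[e0 e1] := trunc_div_approx m0 y0.
rewrite -lerBlDl -mulrBl (le_trans (ler_norm _)) // normrM ger0_norm //.
by rewrite mulrC ler_wpM2l.
Qed.

Lemma staircase_sum {R : archiRealFieldType} (m J : nat) (y : R) :
  0 <= y -> (Num.truncn (m%:R * y) < J)%N ->
  \sum_(j < J) j%:R / m%:R * (j%:R <= m%:R * y < j.+1%:R)%R%:R =
  (Num.truncn (m%:R * y))%:R / m%:R :> R.
Proof.
move=> y0 kJ; have my0 : 0 <= m%:R * y by rewrite mulr_ge0.
rewrite (bigD1 (Ordinal kJ)) //= -truncn_eq // eqxx mulr1 big1 ?addr0 // => j.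
by rewrite -truncn_eq // eq_sym -(inj_eq val_inj) => /negbTE ->; rewrite mulr0.
Qed.

Lemma indic_setb {T : Type} {R : realType} (p : pred T) (x : T) :
  \1_[set t | p t] x = (p x)%:R :> R.
Proof.
rewrite indicE; have [px|npx] := boolP (p x); first by rewrite mem_set.
by rewrite memNset //=; apply/negP.
Qed.

Lemma limn_esup_lt_near {R : realType} (u : (\bar R)^nat) (x : \bar R) :
  (limn_esup u < x)%E -> \forall k \near \oo, (u k < x)%E.
Proof.
rewrite limn_esup_lim (cvg_lim _ (@cvg_esups_inf _ u)) //.
move=> /ereal_inf_lt[_ [N _ <-]] uNx; exists N => // k Nk.
by apply: le_lt_trans uNx; apply: ereal_sup_ubound; exists k.
Qed.

Lemma limn_esup_le_near {R : realType} (u : (\bar R)^nat) (x : \bar R) :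
  (\forall k \near \oo, (u k <= x)%E) -> (limn_esup u <= x)%E.
Proof.
move=> [N _ ux]; rewrite limn_esup_lim; apply: lime_le; first exact: is_cvg_esups.
by exists N => // n Nn; apply: ge_ereal_sup => _ [k /= nk <-]; apply/ux/(leq_trans Nn).
Qed.

Lemma G_measurable_fun_measurable {d} {T : measurableType d} {R : realType}
    {G : set (set T)} {g : T -> R} :
  G `<=` measurable -> G_measurable_fun G g -> measurable_fun setT g.
Proof. by move=> GP gG _ B mB; rewrite setTI; apply/GP/gG. Qed.

Lemma G_measurable_funP {d} {T : measurableType d} {R : realType}
    {G : set (set T)} {f : T -> R} : sigma_algebra setT G ->
  G_measurable_fun G f <-> measurable_fun (setT : set (g_sigma_algebraType G)) f.
Proof.
move=> /measurable_g_measurableTypeE GE; split => [fG _ B mB | mf B mB].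
  by rewrite setTI GE; exact: fG.
by have := mf measurableT B mB; rewrite setTI GE.
Qed.

Lemma filtration_shift {d} {T : measurableType d} {F : nat -> set (set T)} (N : nat) :
  filtration F -> filtration (fun i => F (i + N)).
Proof. by case=> sF FP Finc; split => // i; exact: Finc. Qed.

Lemma measurable_set_ge {d} {T : measurableType d} {R : realType} {f : T -> R} (c : R) :
  measurable_fun setT f -> measurable [set w | c <= f w].
Proof.
move=> mf; have := mf measurableT _ (measurable_itv `[c, +oo[).
by rewrite setTI; congr measurable; apply/seteqP; split => w; rewrite /= in_itv /= andbT.
Qed.

Lemma measure0_le_cvg0 {d} {T : measurableType d} {R : realType}
    (mu : {measure set T -> \bar R}) (A : set T) (t : (\bar R)^nat) :
  (\forall N \near \oo, mu A <= t N)%E -> t @ \oo --> 0%E -> mu A = 0%E.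
Proof.
move=> At t0; apply/eqP; rewrite eq_le measure_ge0 andbT -(cvg_lim _ t0) //.
by apply: lime_ge => //; apply/cvg_ex; exists 0%E.
Qed.

Lemma integrableM_bounded {d} {T : measurableType d} {R : realType}
    {mu : {measure set T -> \bar R}} {h f : T -> R} (M : R) :
  measurable_fun setT h -> (forall w, `|h w| <= M) ->
  mu.-integrable setT (EFin \o f) ->
  mu.-integrable setT (EFin \o (fun w => h w * f w)).
Proof.
move=> mh hM fi; have hb : [bounded h x : R^o | x in setT].
  by exists M; split; [exact: num_real | move=> r Mr x _; exact: le_trans (hM x) (ltW Mr)].
exact: eq_integrable (integrableMr measurableT mh hb fi).
Qed.

Lemma integrable_sqr {d} {T : measurableType d} {R : realType}
    {mu : {measure set T -> \bar R}} {f : T -> R} :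
  measurable_fun setT f -> (\int[mu]_w (f w ^+ 2)%:E < +oo)%E ->
  mu.-integrable setT (EFin \o (fun w => f w ^+ 2)).
Proof.
move=> mf fi; apply/integrableP; split; first exact/measurable_EFinP/measurable_funX.
rewrite (eq_integral (fun w => (f w ^+ 2)%:E)) // => w _ /=.
by rewrite ger0_norm // sqr_ge0.
Qed.

Section nonpositive_conditional_expectation.
Context {d} {T : measurableType d} {R : realType} {P : probability T R}.
Context {G : set (set T)} {X : T -> R}.
Hypotheses (GP : G `<=` measurable) (XG : cond_exp_le0 P G X).

Let iX : P.-integrable setT (EFin \o X). Proof. by case: XG. Qed.

Lemma cond_exp_le0_integral_set A : G A -> (\int[P]_(w in A) (X w)%:E <= 0)%E.
Proof.
move=> GA; have [_ [Y [_ iY YX Y0]]] := XG; rewrite -YX //.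
have mY : measurable_fun A (EFin \o Y).
  exact: measurable_funTS (measurable_int _ iY).
rewrite integralE -[0%E]sube0; apply: leeB; last exact: integral_ge0.
rewrite -(integral0 P A); apply: ae_ge0_le_integral => //; first exact: GP.
- exact: measurable_funepos.
- apply: filterS Y0 => w Yw _ /=.
  by rewrite funeposE /= ge_max lexx lee_fin Yw.
Qed.

Lemma cond_exp_le0_step (n : nat) (c : 'I_n -> R) (A : 'I_n -> set T) :
  (forall j, 0 <= c j) -> (forall j, G (A j)) ->
  (\int[P]_w ((\sum_(j < n) c j * \1_(A j) w) * X w)%:E <= 0)%E.
Proof.
move=> c0 GA.
have iAX j : P.-integrable setT (EFin \o (fun w => \1_(A j) w * X w)).
  apply: (integrableM_bounded 1) iX.
    exact/measurable_indic/GP.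
  by move=> w; rewrite indicE; case: (_ \in _); rewrite ?normr1 ?normr0.
have term_le0 j : (\int[P]_w (c j * \1_(A j) w * X w)%:E <= 0)%E.
  under eq_integral do rewrite -mulrA EFinM.
  rewrite integralZl //; last exact: iAX.
  apply: mule_ge0_le0; first by rewrite lee_fin.
  rewrite [leLHS](_ : _ = \int[P]_(w in A j) (X w)%:E)%E.
    exact: cond_exp_le0_integral_set.
  rewrite [RHS]integral_mkcond; apply: eq_integral => w _.
  by rewrite /patch indicE; case: (_ \in _); rewrite ?mul1r ?mul0r.
under eq_integral do rewrite mulr_suml -sumEFin.
rewrite integral_sum //; last first.
  move=> j; apply: eq_integrable (integrableZl measurableT (c j) (iAX j)) => // w _ /=.
  by rewrite -EFinM mulrA.
by apply: sume_le0 => j _; exact: term_le0.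
Qed.

Section weight.
Context {g : T -> R} {M : R}.
Hypotheses (gG : G_measurable_fun G g) (g0M : forall w, 0 <= g w <= M).

Let igX : P.-integrable setT (EFin \o (fun w => g w * X w)).
Proof.
apply: (integrableM_bounded M (G_measurable_fun_measurable GP gG) _ iX).
by move=> w; have /andP[g0 gM] := g0M w; rewrite ger0_norm.
Qed.

(* [g] is approximated from below within [1/m] by a [G]-step function. *)
Lemma cond_exp_le0_weight_le (m : nat) : (0 < m)%N ->
  (\int[P]_w (g w * X w)%:E <= \int[P]_w (`|X w| / m%:R)%:E)%E.
Proof.
move=> m0; have m0R : 0 < (m%:R : R) by rewrite ltr0n.
pose J := (Num.truncn (m%:R * M)).+1.
pose A (j : 'I_J) := [set w | (j%:R <= m%:R * g w < j.+1%:R)%R].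
have GA j : G (A j).
  rewrite (_ : A j = g @^-1` `[j%:R / m%:R, j.+1%:R / m%:R[).
    by apply: gG; exact: measurable_itv.
  by apply/seteqP; split => w;
    rewrite /A /= in_itv /= ler_pdivrMr // ltr_pdivlMr // ![g w * _]mulrC.
pose s w : R := \sum_(j < J) j%:R / m%:R * \1_(A j) w.
have sE w : s w = (Num.truncn (m%:R * g w))%:R / m%:R.
  have /andP[g0 gM] := g0M w.
  rewrite -(staircase_sum _ J) //; first by apply: eq_bigr => j _; rewrite indic_setb.
  by rewrite ltnS le_truncn // ler_pM2l.
have isX : P.-integrable setT (EFin \o (fun w => s w * X w)).
  apply: (integrableM_bounded M _ _ iX).
    apply: measurable_sum => j; apply: measurable_funM; first exact: measurable_cst.
    exact/measurable_indic/GP.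
  move=> w; have /andP[g0 gM] := g0M w; have /andP[sg _] := trunc_div_approx m0 g0.
  by rewrite ger0_norm sE ?divr_ge0 //; lra.
have iXm : P.-integrable setT (EFin \o (fun w => `|X w| / m%:R)).
  exact: eq_integrable (integrableZr measurableT (m%:R^-1) (integrable_norm iX)).
have iR : P.-integrable setT (EFin \o (fun w => s w * X w + `|X w| / m%:R)).
  exact: eq_integrable (integrableD measurableT isX iXm).
apply: le_trans (le_integral measurableT igX iR _) _.
  move=> w _; have /andP[g0 _] := g0M w.
  by rewrite lee_fin sE trunc_div_mul_le.
rewrite integralD_EFin // -[leRHS]add0e leeD2r //.
exact: cond_exp_le0_step.
Qed.

Lemma cond_exp_le0_weight : (\int[P]_w (g w * X w)%:E <= 0)%E.
Proof.
have Ifin := integrable_fin_num measurableT igX.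
have Cfin := integrable_fin_num measurableT (integrable_norm iX).
rewrite -(fineK Ifin) lee_fin; apply: (le0_of_le_divn _ (fine (\int[P]_w `|X w|%:E)%E)).
move=> m m0; rewrite -lee_fin fineK // (le_trans (cond_exp_le0_weight_le m m0)) //.
under eq_integral do rewrite EFinM.
by rewrite EFinM fineK // integralZr //; exact: integrable_norm iX.
Qed.

End weight.

End nonpositive_conditional_expectation.

Section reflected_walk.
Context {R : realDomainType}.
Implicit Types (u x : nat -> R) (a c : R).

Fixpoint reflected_walk u n : R :=
  if n is i.+1 then
    let s := reflected_walk u i in if 1 <= s then s else Num.max (s + u i) 0
  else 0.

Lemma reflected_walk_ge0 u n : 0 <= reflected_walk u n.
Proof.
by case: n => //= n; case: ifP => [/(le_trans ler01)|_]; rewrite ?le_max ?lexx ?orbT.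
Qed.

Lemma reflected_walk_ge1 u m n :
  (m <= n)%N -> 1 <= reflected_walk u m -> 1 <= reflected_walk u n.
Proof.
move=> /subnK <- h; elim: (n - m)%N => [|k IH] //.
by rewrite addSn /= IH.
Qed.

Lemma reflected_walk_sqr_le u i :
  reflected_walk u i.+1 ^+ 2 <= reflected_walk u i ^+ 2 +
    (if 1 <= reflected_walk u i then 0 else 2 * reflected_walk u i) * u i + u i ^+ 2.
Proof.
rewrite /=; set s := reflected_walk u i; case: ifP => _.
  by rewrite mul0r addr0 lerDl sqr_ge0.
rewrite (_ : s ^+ 2 + 2 * s * u i + u i ^+ 2 = (s + u i) ^+ 2); last by ring.
by have [//|_] := leP 0 (s + u i); rewrite expr0n sqr_ge0.
Qed.

Definition increment_above a x k := (x k.+1 - x k) * (a <= x k)%R%:R.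

Lemma le_reflected_walk x a c :
  (forall k, x k < a -> x k.+1 <= a + c) ->
  (forall i, reflected_walk (increment_above a x) i < 1) ->
  forall i, x i <= Num.max (x 0) (a + c) + reflected_walk (increment_above a x) i.
Proof.
move=> overshoot walk_lt1; set C := Num.max _ _.
have x0C : x 0 <= C by rewrite le_max lexx.
have acC : a + c <= C by rewrite le_max lexx orbT.
elim=> [|i IH]; first by rewrite addr0.
set D := increment_above a x; have := walk_lt1 i; rewrite ltNge /= => /negbTE ->.
have [ax|xa] := leP a (x i).
  rewrite /D /increment_above ax mulr1 -/D.
  apply: (@le_trans _ _ (C + (reflected_walk D i + (x i.+1 - x i)))); first lra.
  by rewrite lerD2l le_max lexx.
apply: le_trans (overshoot _ xa) (le_trans acC _).
by rewrite lerDl le_max lexx orbT.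
Qed.

End reflected_walk.

Lemma overshoot_near {R : realType} {x : nat -> R} {a b c : R} : b < c ->
  (limn_esup (fun k => ((x k < a < x k.+1)%R%:R * (x k.+1 - a))%:E) <= b%:E)%E ->
  \forall k \near \oo, x k < a -> x k.+1 <= a + c.
Proof.
move=> bc sup_le; have bcE : (b%:E < c%:E)%E by rewrite lte_fin.
have /limn_esup_lt_near := le_lt_trans sup_le bcE.
apply: filterS => k + xka; have [axk|xa] := ltP a (x k.+1).
  by rewrite xka mul1r lte_fin ltrBlDl => /ltW.
by rewrite andbF mul0r lte_fin => c0; apply: le_trans xa _; rewrite lerDl ltW.
Qed.

Lemma limn_esup_lt_pinfty_of_walk {R : realType} (x : nat -> R) (a c : R) (N : nat) :
  (forall k, (N <= k)%N -> x k < a -> x k.+1 <= a + c) ->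
  (forall i, reflected_walk (increment_above a (fun n => x (n + N))) i < 1) ->
  (limn_esup (fun n => (x n)%:E) < +oo)%E.
Proof.
move=> overshoot walk_lt1.
have bound := le_reflected_walk _ _ _ (fun k => overshoot (k + N) (leq_addl k N)) walk_lt1.
apply: le_lt_trans (ltry (Num.max (x N) (a + c) + 1)).
apply: limn_esup_le_near; exists N => // n /= Nn.
rewrite lee_fin -(subnK Nn); apply: le_trans (bound (n - N)%N) _.
by rewrite lerD2l ltW.
Qed.

Section reflected_walk_hitting.
Context {d} {T : measurableType d} {R : realType} {P : probability T R}.
Context {H : nat -> set (set T)} {D : nat -> T -> R}.
Hypotheses (hH : filtration H)
  (DH : forall i, G_measurable_fun (H i.+1) (D i))
  (D_le0 : forall i, cond_exp_le0 P (H i) (D i))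
  (D2_fin : forall i, (\int[P]_w (D i w ^+ 2)%:E < +oo)%E).

Let U i w := reflected_walk (D^~ w) i.

Lemma reflected_walk_G_measurable i : G_measurable_fun (H i) (U i).
Proof.
have [sH _ Hinc] := hH.
elim: i => [|i IH]; first by apply/(G_measurable_funP (sH 0)); exact: measurable_cst.
apply/(G_measurable_funP (sH i.+1)).
have mU : measurable_fun (setT : set (g_sigma_algebraType (H i.+1))) (U i).
  by apply/(G_measurable_funP (sH i.+1)) => B mB; apply/Hinc/IH.
have mD : measurable_fun (setT : set (g_sigma_algebraType (H i.+1))) (D i).
  exact/(G_measurable_funP (sH i.+1)).
apply: measurable_fun_ifT => //.
  by apply: measurable_fun_ler => //; exact: measurable_cst.
by apply: measurable_maxr; [exact: measurable_funD | exact: measurable_cst].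
Qed.

Let HP i : H i `<=` measurable. Proof. by case: hH. Qed.

Let mU i : measurable_fun setT (U i).
Proof. exact: G_measurable_fun_measurable (HP i) (reflected_walk_G_measurable i). Qed.

Let mD i : measurable_fun setT (D i).
Proof. exact: G_measurable_fun_measurable (HP i.+1) (DH i). Qed.

Lemma reflected_walk_sqr_integral i :
  (\int[P]_w (U i w ^+ 2)%:E <= \sum_(j < i) \int[P]_w (D j w ^+ 2)%:E)%E.
Proof.
elim: i => [|i IH].
  by rewrite big_ord0; under eq_integral do rewrite expr0n /=; rewrite integral0.
(* [U i.+1 ^+ 2 <= U i ^+ 2 + g * D i + D i ^+ 2] with an [H i]-measurable weight [g],
   so the cross term has nonpositive mean. *)
pose g w := if 1 <= U i w then 0 else 2 * U i w.
have gH : G_measurable_fun (H i) g.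
  have [sH _ _] := hH; apply/(G_measurable_funP (sH i)).
  have mUi := (G_measurable_funP (sH i)).1 (reflected_walk_G_measurable i).
  apply: measurable_fun_ifT; [|exact: measurable_cst|].
    by apply: measurable_fun_ler => //; exact: measurable_cst.
  by apply: measurable_funM => //; exact: measurable_cst.
have g02 w : 0 <= g w <= 2.
  rewrite /g; case: ifPn => [_|]; first by rewrite lexx ler0n.
  rewrite -ltNge => U1; rewrite mulr_ge0 ?reflected_walk_ge0 //=.
  by rewrite -[leRHS]mulr1 ler_wpM2l // ltW.
have iU : P.-integrable setT (EFin \o (fun w => U i w ^+ 2)).
  apply: integrable_sqr (mU i) (le_lt_trans IH _).
  by apply: lte_sum_pinfty => j _; exact: D2_fin.
have igD : P.-integrable setT (EFin \o (fun w => g w * D i w)).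
  apply: (integrableM_bounded 2 (G_measurable_fun_measurable (HP i) gH) _ (D_le0 i).1).
  by move=> w; have /andP[g0 g2] := g02 w; rewrite ger0_norm.
have iD := integrable_sqr (mD i) (D2_fin i).
have iUg := integrableD measurableT iU igD.
have iR := integrableD measurableT iUg iD.
apply: le_trans (ge0_le_integral P measurableT _ _ (measurable_int _ iR) _) _.
- by move=> w _; rewrite lee_fin sqr_ge0.
- exact/measurable_EFinP/measurable_funX.
- by move=> w _; rewrite /= -!EFinD lee_fin; exact: reflected_walk_sqr_le.
rewrite integralD // integralD // big_ord_recr /= leeD2r // -[leRHS]adde0 leeD //.
by have := cond_exp_le0_weight (HP i) (D_le0 i) gH g02.
Qed.

Lemma reflected_walk_hit_le :
  (P (\bigcup_i [set w | (1 <= U i w)%R]) <= \sum_(0 <= j <oo) \int[P]_w (D j w ^+ 2)%:E)%E.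
Proof.
have mA i : measurable [set w | 1 <= U i w] := measurable_set_ge 1 (mU i).
have nd : nondecreasing_seq (fun i => [set w | 1 <= U i w]).
  by move=> m n mn; apply/subsetPset => w; exact: reflected_walk_ge1 mn.
have PA := nondecreasing_cvg_mu (mu := P) mA (bigcupT_measurable _ mA) nd.
rewrite -(cvg_lim _ PA) //; apply: lime_le; first by apply/cvg_ex; eexists; exact: PA.
apply: nearW => i /=.
have PA_le : (P [set w | (1 <= U i w)%R] <= \int[P]_w (U i w ^+ 2)%:E)%E.
  rewrite -(setIT [set w | 1 <= U i w]) -integral_indic //.
  apply: ge0_le_integral => //.
  - exact/measurable_EFinP/measurable_indic.
  - exact/measurable_EFinP/measurable_funX.
  move=> w _; rewrite lee_fin indic_setb.
  have [U1|_] := boolP (1 <= U i w); last exact: sqr_ge0.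
  by rewrite expr2 (le_trans U1) // ler_peMr // (le_trans _ U1).
apply: le_trans PA_le (le_trans (reflected_walk_sqr_integral i) _).
rewrite -(big_mkord xpredT (fun j => \int[P]_w (D j w ^+ 2)%:E)%E).
by apply: nneseries_lim_ge => j _ _; apply: integral_ge0 => w _; rewrite lee_fin sqr_ge0.
Qed.

End reflected_walk_hitting.

Section limsup_finite.
Context {d} {T : measurableType d} {R : realType} {P : probability T R}.
Context {F : nat -> set (set T)} {xi : nat -> T -> R} {a : R}.
Hypotheses (hF : filtration F) (xiF : adapted F xi).

Let D k w := increment_above a (xi^~ w) k.

Hypotheses (D_le0 : forall k, cond_exp_le0 P (F k) (D k))
  (D2_sum : (\sum_(0 <= k <oo) \int[P]_w (D k w ^+ 2)%:E < +oo)%E).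

Let hits_one N := \bigcup_i
  [set w | (1 <= reflected_walk (increment_above a (fun n => xi (n + N) w)) i)%R].

Let D2_ge0 k : (0 <= \int[P]_w (D k w ^+ 2)%:E)%E.
Proof. by apply: integral_ge0 => w _; rewrite lee_fin sqr_ge0. Qed.

Lemma increment_above_G_measurable k : G_measurable_fun (F k.+1) (D k).
Proof.
have [sF _ Finc] := hF; apply/(G_measurable_funP (sF k.+1)).
have mxiS := (G_measurable_funP (sF k.+1)).1 (xiF k.+1).
have mxi := (G_measurable_funP (sF k.+1)).1 (fun B mB => Finc k _ (xiF k B mB)).
apply: measurable_funM; first exact: measurable_funB.
rewrite (_ : (fun w => _) = \1_[set w | (a <= xi k w)%R]).
  exact/measurable_indic/measurable_set_ge.
by apply/funext => w; rewrite indic_setb.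
Qed.
Let D2_fin k : (\int[P]_w (D k w ^+ 2)%:E < +oo)%E.
Proof.
apply: le_lt_trans D2_sum; apply: le_trans (nneseries_lim_ge k.+1 (fun n _ _ => D2_ge0 n)).
by rewrite big_nat_recr //= leeDr // sume_ge0.
Qed.

Lemma hits_one_le N : (P (hits_one N) <= \sum_(N <= k <oo) \int[P]_w (D k w ^+ 2)%:E)%E.
Proof.
rewrite -nneseries_addn //.
exact: (reflected_walk_hit_le (P := P) (filtration_shift N hF)
  (fun i => increment_above_G_measurable (i + N))
  (fun i => D_le0 (i + N)) (fun i => D2_fin (i + N))).
Qed.

Lemma hits_one_measurable N : measurable (hits_one N).
Proof.
have [_ FP _] := hF; apply: bigcupT_measurable => i; apply: measurable_set_ge.
apply: (G_measurable_fun_measurable (FP (i + N))).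
exact: reflected_walk_G_measurable (filtration_shift N hF)
  (fun j => increment_above_G_measurable (j + N)) i.
Qed.

Lemma hits_one_tail_null N0 : P (\bigcap_j hits_one (j + N0)) = 0%E.
Proof.
apply: measure0_le_cvg0 (nneseries_tail_cvg D2_sum (fun k _ => D2_ge0 k)).
exists N0 => // N /= N0N; apply: le_trans (hits_one_le N).
have mcap : measurable (\bigcap_j hits_one (j + N0)).
  by apply: bigcapT_measurable => j; exact: hits_one_measurable.
apply: le_measure; rewrite ?inE; [exact: mcap | exact: hits_one_measurable |].
by move=> w /(_ (N - N0)%N I); rewrite subnK.
Qed.

Lemma limn_esup_lt_pinfty_ae (b : R) :
  {ae P, forall w, (limn_esup (fun k =>
     ((xi k w < a < xi k.+1 w)%R%:R * (xi k.+1 w - a))%:E) <= b%:E)%E} ->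
  {ae P, forall w, (limn_esup (fun n => (xi n w)%:E) < +oo)%E}.
Proof.
move=> overshoot_ae; have hits_one_null N0 : P.-negligible (\bigcap_j hits_one (j + N0)).
  apply/negligibleP; last exact: hits_one_tail_null.
  by apply: bigcapT_measurable => j; exact: hits_one_measurable.
apply: negligibleS (negligibleU overshoot_ae (negligible_bigcup hits_one_null)).
move=> w /=; apply: contra_notP => /not_orP[/contrapT overshoot not_hits_one].
have b1 : b < b + 1 by rewrite ltrDl.
have [N0 _ overshootN0] := overshoot_near b1 overshoot.
have /existsNP[j /not_implyP[_ not_hits_one_j]] : ~ (\bigcap_j hits_one (j + N0)) w.
  by move=> h; apply: not_hits_one; exists N0.
apply: (limn_esup_lt_pinfty_of_walk _ _ _ (j + N0)) => [k jk|i].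
  by apply: overshootN0; apply: leq_trans jk; exact: leq_addl.
by rewrite ltNge; apply/negP => h; apply: not_hits_one_j; exists i.
Qed.

End limsup_finite.

Theorem mainTheorem3 (d : measure_display) (T : measurableType d) (R : realType)
  (P : probability T R) (F : nat -> set (set T)) (xi : nat -> T -> R)
  (a b : R) :
  filtration F -> adapted F xi -> 0 < b ->
  (forall k, cond_exp_le0 P (F k)
     (fun w => (xi k.+1 w - xi k w) * \1_[set w' | a <= xi k w'] w)) ->
  {ae P, forall w, (limn_esup (fun k =>
     (\1_[set w' | xi k w' < a < xi k.+1 w'] w * (xi k.+1 w - a))%:E) <= b%:E)%E} ->
  (\sum_(0 <= k <oo)
     \int[P]_w (((xi k.+1 w - xi k w) ^+ 2 * \1_[set w' | a <= xi k w'] w)%:E)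
     < +oo)%E ->
  {ae P, forall w, (limn_esup (fun n => (xi n w)%:E) < +oo)%E}.
Proof.
move=> hF xiF _ cond_le0 overshoot_ae sum_sqr.
have incrE k : (fun w => (xi k.+1 w - xi k w) * \1_[set w' | a <= xi k w'] w) =
               (fun w => increment_above a (xi^~ w) k).
  by apply/funext => w; rewrite indic_setb.
have sqrE k w : (xi k.+1 w - xi k w) ^+ 2 * \1_[set w' | a <= xi k w'] w =
                increment_above a (xi^~ w) k ^+ 2.
  by rewrite indic_setb exprMn; case: (a <= xi k w); rewrite ?expr1n ?expr0n.
apply: (limn_esup_lt_pinfty_ae (a := a) hF xiF _ _ b).
- by move=> k; have := cond_le0 k; rewrite incrE.
- by under eq_eseriesr do under eq_integral do rewrite -sqrE.
- by apply: filterS overshoot_ae => w; under eq_fun do rewrite indic_setb.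
Qed.
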